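(* Let $S=(X,\prec,\sqsubset)$ be a finite so-structure. Then: (1) for all $\alpha,\beta\in X$: $\alpha\in[\beta]$ if and only if for every $\lhd\in ext(S)$, either $\alpha=\beta$ or $\alpha\frown_\lhd\beta$; (2) there exists $\lhd\in ext(S)$ such that $\Omega_\lhd=[\gamma_1]\dots[\gamma_k]$ for some $\gamma_1,\dots,\gamma_k\in X$, i.e. every step of $\Omega_\lhd$ is a $\equiv_\sqsubset$-equivalence class; (3) if $[\alpha]\,(\hat\sqsubset)^{\mathrm{cov}}\,[\beta]$, then there exists $\lhd\in ext(S)$ with $\Omega_\lhd=[\delta_1]\dots[\delta_m]$ for some $\delta_1,\dots,\delta_m\in X$, and some $1\le i<m$ with $\alpha\in[\delta_i]$ and $\beta\in[\delta_{i+1}]$.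
   Context: A stratified order structure (so-structure) is a triple $S=(X,\prec,\sqsubset)$ with $\prec,\sqsubset\subseteq X\times X$ such that for all $\alpha,\beta,\gamma\in X$: (S1) $\neg(\alpha\sqsubset\alpha)$; (S2) $\alpha\prec\beta\Rightarrow\alpha\sqsubset\beta$; (S3) $\alpha\sqsubset\beta\sqsubset\gamma\wedge\alpha\neq\gamma\Rightarrow\alpha\sqsubset\gamma$; (S4) $(\alpha\sqsubset\beta\wedge\beta\prec\gamma)\vee(\alpha\prec\beta\wedge\beta\sqsubset\gamma)\Rightarrow\alpha\prec\gamma$. For a relation $\lhd$ on $X$: $\alpha\frown_\lhd\beta$ iff $\alpha\neq\beta$, $\neg(\alpha\lhd\beta)$ and $\neg(\beta\lhd\alpha)$; $\lhd^\frown:=\lhd\cup\frown_\lhd$. A partial order $\lhd$ is stratified if $\frown_\lhd\cup\mathrm{id}_X$ is an equivalence relation. For a stratified order $\lhd$ on a finite set $X$, $\Omega_\lhd=B_1\dots B_k$ denotes the unique sequence of nonempty pairwise disjoint sets with union $X$ such that $\lhd=\bigcup_{i<j}B_i\times B_j$. A stratified extension of $S$ is a stratified order $\lhd$ on $X$ with $\prec\subseteq\lhd$ and $\sqsubset\subseteq\lhd^\frown$; $ext(S)$ is the set of all stratified extensions of $S$. Define $\alpha\equiv_\sqsubset\beta$ iff $\alpha=\beta$ or ($\alpha\sqsubset\beta$ and $\beta\sqsubset\alpha$); $[\alpha]$ is the equivalence class of $\alpha$. On the classes, $[\alpha]\,\hat\sqsubset\,[\beta]$ iff $[\alpha]\neq[\beta]$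 and $([\alpha]\times[\beta])\cap\sqsubset\neq\emptyset$. For a relation $R$, its covering relation is $R^{\mathrm{cov}}:=\{(x,y): xRy\wedge\neg\exists z\,(xRz\wedge zRy)\}$. *)

From mathcomp Require Import all_boot.
Set Implicit Arguments. Unset Strict Implicit. Unset Printing Implicit Defensive.

Section SO.
Variable X : finType.

Definition so_structure (prec sq : rel X) : Prop :=
  [/\ (forall a, ~~ sq a a),
      (forall a b, prec a b -> sq a b),
      (forall a b c, sq a b -> sq b c -> a != c -> sq a c) &
      (forall a b c, (sq a b && prec b c) || (prec a b && sq b c) -> prec a c)].

Definition frown (R : rel X) (a b : X) : bool :=
  [&& a != b, ~~ R a b & ~~ R b a].

Definition rel_frown (R : rel X) : rel X := fun a b => R a b || frown R a b.

Definition partial_order (R : rel X) : Prop :=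
  (forall a, ~~ R a a) /\ (forall a b c, R a b -> R b c -> R a c).

Definition stratified_order (R : rel X) : Prop :=
  partial_order R /\
  let E := fun a b => (a == b) || frown R a b in
  [/\ (forall a, E a a), (forall a b, E a b -> E b a) &
      (forall a b c, E a b -> E b c -> E a c)].

Definition ext (prec sq : rel X) (R : rel X) : Prop :=
  [/\ stratified_order R,
      (forall a b, prec a b -> R a b) &
      (forall a b, sq a b -> rel_frown R a b)].

(* Omega_R = s : s is a sequence of nonempty pairwise disjoint sets with
   union X such that R = \bigcup_{i<j} B_i x B_j.  (Omega_R is the unique
   such sequence, so "Omega_R = s" is expressed by this predicate.) *)
Definition is_Omega (R : rel X) (s : seq {set X}) : Prop :=
  [/\ (forall i, i < size s -> nth set0 s i != set0),
      (forall i j, i < size s -> j < size s -> i != j ->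
         [disjoint nth set0 s i & nth set0 s j]),
      (forall x : X, exists2 i, i < size s & x \in nth set0 s i) &
      (forall a b, R a b <->
         exists i j, [/\ i < j, j < size s, a \in nth set0 s i & b \in nth set0 s j])].

Definition sq_eqv (sq : rel X) (a b : X) : bool :=
  (a == b) || (sq a b && sq b a).

Definition cls (sq : rel X) (a : X) : {set X} := [set b | sq_eqv sq b a].

Definition hat_sq (sq : rel X) (A B : {set X}) : Prop :=
  [/\ exists a, A = cls sq a, exists b, B = cls sq b, A != B &
      exists a b, [/\ a \in A, b \in B & sq a b]].

End SO.

Definition cov (T : Type) (R : T -> T -> Prop) (x y : T) : Prop :=
  R x y /\ ~ (exists z, R x z /\ R z y).

From mathcomp Require Import all_boot.
Set Implicit Arguments. Unset Strict Implicit. Unset Printing Implicit Defensive.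

(* Write [≡] for [sq_eqv sq] and [x < y] for [sq x y && ~~ sq y x]; [<] is a
   strict order that is invariant under [≡] on both sides.  A rank [f] onto
   [0, k) whose level sets are the [≡]-classes and which increases along [<]
   defines the stratified extension [f x < f y], whose steps are the classes
   in increasing rank; such ranks exist because one can repeatedly remove the
   class of a maximal element.  Distinct [≡]-related elements are related by
   [sq] both ways, so every extension leaves them incomparable, which gives
   (1), and ranks give (2).  For (3), when [[a]] is covered by [[b]], split the
   classes into four blocks: those below [b] other than [[a]], then [[a]],
   then [[b]], then the rest.  Blocks are monotone along [<], so comparing by
   block first and by [<] second is again such a strict order, and any of its
   ranks puts [[b]] right after [[a]]. *)

Definition ranking (X : finType) (E L : rel X) (A : {set X}) (f : X -> nat)
    (k : nat) : Prop :=
  [/\ {in A, forall x, f x < k},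
      forall i, i < k -> exists2 x, x \in A & f x = i,
      {in A &, forall x y, (f x == f y) = E x y} &
      {in A &, forall x y, L x y -> f x < f y}].

Lemma ranking_sub (X : finType) (E L1 L2 : rel X) A f k :
  (forall x y, L1 x y -> L2 x y) -> ranking E L2 A f k -> ranking E L1 A f k.
Proof.
by move=> sub12 [f_lt f_surj f_eq f_mono]; split=> // x y xA yA /sub12; apply: f_mono.
Qed.

Section Ranking.
Variables (X : finType) (E L : rel X).
Hypotheses (E_refl : reflexive E) (E_sym : symmetric E).
Hypothesis E_trans : forall x y z, E x y -> E y z -> E x z.
Hypothesis L_irr : irreflexive L.
Hypothesis L_trans : forall x y z, L x y -> L y z -> L x z.
Hypothesis eqv_L_trans : forall x y z, E x y -> L y z -> L x z.

Lemma exists_maximal (A : {set X}) x0 : x0 \in A ->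
  exists2 m, m \in A & forall y, y \in A -> ~~ L m y.
Proof.
move=> x0A; have [m mA m_min] := arg_minnP (fun x => #|[set y in A | L x y]|) x0A.
exists m => // y yA; apply/negP => Lmy.
have := m_min y yA; rewrite leqNgt => /negP; apply; apply: proper_card.
apply/properP; split.
  by apply/subsetP => z; rewrite !inE => /andP[-> /(L_trans Lmy)].
by exists y; rewrite !inE ?yA ?Lmy ?L_irr.
Qed.

Lemma exists_ranking (A : {set X}) : exists f k, ranking E L A f k.
Proof.
elim: {A}_.+1 {-2}A (ltnSn #|A|) => // n IH A cardA.
have [-> | [x0 x0A]] := set_0Vmem A.
  by exists (fun=> 0), 0; split=> // [x | x y | x y]; rewrite inE.
have [m mA m_max] := exists_maximal x0A.
pose A' := A :\: [set y | E y m].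
have cardA' : #|A'| < n.
  rewrite -ltnS; apply: leq_trans _ cardA; rewrite ltnS.
  apply: proper_card; apply/properP; split.
    exact: subsetDl.
  by exists m; rewrite // !inE E_refl.
have [f [k [f_lt f_surj f_eq f_mono]]] := IH A' cardA'.
have inA' x : x \in A -> ~~ E x m -> x \in A' by rewrite !inE => -> ->.
have eqv_m x y : E x m -> E x y = E y m.
  move=> xm; apply/idP/idP => [xy | ym]; first by apply: E_trans xm; rewrite E_sym.
  by apply: E_trans xm _; rewrite E_sym.
exists (fun x => if E x m then k else f x), k.+1; split.
- move=> x xA; case: ifP => xm //.
  by rewrite ltnS ltnW // f_lt // inA' ?xm.
- move=> i; rewrite ltnS leq_eqVlt => /orP[/eqP-> | lt_ik].
    by exists m; rewrite ?E_refl.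
  have [x] := f_surj i lt_ik; rewrite !inE => /andP[xm xA] <-.
  by exists x; rewrite // (negbTE xm).
- move=> x y xA yA; case: ifP => xm; case: ifP => ym.
  + by rewrite eqxx eqv_m.
  + by rewrite eqv_m // ym gtn_eqF // f_lt // inA' ?ym.
  + by rewrite E_sym eqv_m // xm ltn_eqF // f_lt // inA' ?xm.
  + by apply: f_eq; rewrite inA' ?xm ?ym.
- move=> x y xA yA Lxy; case: ifP => xm.
    by have := m_max y yA; rewrite (eqv_L_trans _ Lxy) // E_sym.
  case: ifP => ym; first by rewrite f_lt // inA' ?xm.
  by apply: f_mono; rewrite ?inA' ?xm ?ym.
Qed.

End Ranking.

Section Layered.
Variables (X : finType) (E L : rel X) (p : X -> nat).
Hypothesis L_irr : irreflexive L.
Hypothesis L_trans : forall x y z, L x y -> L y z -> L x z.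
Hypothesis eqv_L_trans : forall x y z, E x y -> L y z -> L x z.
Hypothesis p_eqv : forall x y, E x y -> p x = p y.
Hypothesis p_mono : forall x y, L x y -> p x <= p y.

Definition layered : rel X := fun x y => (p x < p y) || L x y.

Lemma layered_irr : irreflexive layered.
Proof. by move=> x; rewrite /layered ltnn L_irr. Qed.

Lemma layered_trans x y z : layered x y -> layered y z -> layered x z.
Proof.
case/orP=> [pxy | Lxy] /orP[pyz | Lyz]; apply/orP.
- by left; exact: ltn_trans pxy pyz.
- by left; exact: leq_trans pxy (p_mono Lyz).
- by left; exact: leq_ltn_trans (p_mono Lxy) pyz.
- by right; exact: L_trans Lxy Lyz.
Qed.

Lemma eqv_layered_trans x y z : E x y -> layered y z -> layered x z.
Proof.
move=> xy /orP[pyz | Lyz]; apply/orP; first by left; rewrite (p_eqv xy).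
by right; exact: eqv_L_trans xy Lyz.
Qed.

End Layered.

Section Adjacent.
Variables (X : finType) (E L : rel X).
Hypotheses (E_refl : reflexive E) (E_sym : symmetric E).
Hypothesis E_trans : forall x y z, E x y -> E y z -> E x z.
Hypothesis L_irr : irreflexive L.
Hypothesis L_trans : forall x y z, L x y -> L y z -> L x z.
Hypothesis eqv_L_trans : forall x y z, E x y -> L y z -> L x z.
Hypothesis L_eqv_trans : forall x y z, L x y -> E y z -> L x z.
Variables a b : X.
Hypothesis L_ab : L a b.
Hypothesis nothing_between : forall c, L a c -> L c b -> False.

Lemma eqv_LF x y : E x y -> L x y = false.
Proof.
by move=> xy; apply/negbTE/negP => Lxy; have := L_irr y; rewrite (eqv_L_trans _ Lxy) // E_sym.
Qed.

Definition block x := if E x a then 1 else if E x b then 2 else if L x b then 0 else 3.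

Lemma block_below x : L x b -> block x = E x a.
Proof.
move=> Lxb; rewrite /block; case: ifP => // _.
by case: ifP => [xb | _]; [rewrite eqv_LF in Lxb | rewrite Lxb].
Qed.

Lemma block_eqv x y : E x y -> block x = block y.
Proof.
move=> xy; have eqvE z : E x z = E y z.
  by apply/idP/idP => [xz | yz]; [apply: E_trans _ xz; rewrite E_sym | exact: E_trans xy yz].
have Lb : L x b = L y b.
  by apply/idP/idP => [xb | yb]; [apply: eqv_L_trans _ xb; rewrite E_sym | exact: eqv_L_trans xy yb].
by rewrite /block !eqvE Lb.
Qed.

Lemma block_mono x y : L x y -> block x <= block y.
Proof.
move=> Lxy; rewrite {2}/block; case: ifP => [ya | _].
  by rewrite block_below ?leq_b1 //; exact: L_trans (L_eqv_trans Lxy ya) L_ab.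
case: ifP => [yb | _].
  by rewrite block_below ?(leq_trans (leq_b1 _)) //; exact: L_eqv_trans Lxy yb.
case: ifP => [Lyb | _]; last by rewrite /block; case: (E x a) (E x b) (L x b) => [] [] [].
rewrite block_below; last exact: L_trans Lxy Lyb.
suff -> : E x a = false by []; apply/negbTE/negP => xa.
by apply: (nothing_between _ Lyb); apply: eqv_L_trans _ Lxy; rewrite E_sym.
Qed.

Lemma exists_ranking_adjacent :
  exists f k, ranking E L setT f k /\ f b = (f a).+1.
Proof.
have lay_L x y : L x y -> layered L block x y by move=> Lxy; rewrite /layered Lxy orbT.
have [f [k rk]] := exists_ranking E_refl E_sym E_trans (layered_irr block L_irr)
  (layered_trans L_trans block_mono) (eqv_layered_trans eqv_L_trans block_eqv) setT.
exists f, k; split; first exact: ranking_sub rk.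
have [f_lt f_surj f_eq f_mono] := rk.
have f_ab : f a < f b by apply: f_mono; rewrite ?in_setT ?lay_L.
apply/eqP; rewrite eqn_leq f_ab andbT leqNgt; apply/negP => gap.
have [y _ fy] := f_surj (f a).+1 (ltn_trans gap (f_lt b (in_setT b))).
have ya : E y a = false by rewrite -f_eq ?in_setT // fy gtn_eqF.
have yb : E y b = false by rewrite -f_eq ?in_setT // fy ltn_eqF.
have block_a : block a = 1 by rewrite /block E_refl.
have ba : E b a = false by apply/negP; rewrite E_sym => /eqv_LF; rewrite L_ab.
have block_b : block b = 2 by rewrite /block ba E_refl.
case Lyb: (L y b).
  have : f y < f a by apply: f_mono; rewrite ?in_setT // /layered block_a /block ya yb Lyb.
  by rewrite fy ltnNge leqnSn.
have : f b < f y by apply: f_mono; rewrite ?in_setT // /layered block_b /block ya yb Lyb.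
by rewrite fy ltnNge ltnW.
Qed.

End Adjacent.

Lemma exists_preimage_iota (T : Type) (f : T -> nat) k :
  (forall i, i < k -> exists x, f x = i) -> exists s, map f s = iota 0 k.
Proof.
elim: k => [|k IH] f_surj; first by exists [::].
have [s fs] := IH (fun i lt_ik => f_surj i (ltnW lt_ik)).
have [x fx] := f_surj k (ltnSn k).
by exists (rcons s x); rewrite map_rcons fs fx -cats1 -addn1 iotaD.
Qed.

Lemma frown_ltnE (X : finType) (f : X -> nat) x y :
  frown (fun x y => f x < f y) x y = (x != y) && (f x == f y).
Proof. by rewrite /frown -!leqNgt eqn_leq [(f y <= _) && _]andbC. Qed.

Lemma stratified_order_ltn (X : finType) (f : X -> nat) :
  stratified_order (fun x y => f x < f y).
Proof.
have eqvE x y : (x == y) || frown (fun x y => f x < f y) x y = (f x == f y).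
  by rewrite frown_ltnE; case: eqVneq => [->|]; rewrite ?eqxx.
split; first by split=> [x | x y z]; [rewrite ltnn | exact: ltn_trans].
split=> [x | x y | x y z]; rewrite /= !eqvE //; first by rewrite eq_sym.
by move=> /eqP-> /eqP->.
Qed.

Lemma is_Omega_levels (X : finType) (f : X -> nat) k :
  (forall x, f x < k) -> (forall i, i < k -> exists x, f x = i) ->
  is_Omega (fun x y => f x < f y) (mkseq (fun i => [set x | f x == i]) k).
Proof.
move=> f_lt f_surj; rewrite /is_Omega size_mkseq; split.
- move=> i lt_ik; rewrite nth_mkseq //; have [x fx] := f_surj i lt_ik.
  by apply/set0Pn; exists x; rewrite inE fx.
- move=> i j lt_ik lt_jk neq_ij; rewrite !nth_mkseq //; apply/pred0P => x /=.
  rewrite !inE; apply/negbTE/negP => /andP[/eqP fxi /eqP fxj].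
by rewrite -fxi fxj eqxx in neq_ij.
- by move=> x; exists (f x); rewrite ?nth_mkseq ?inE.
- move=> x y; split=> [fxy | [i [j [lt_ij lt_jk]]]].
    by exists (f x), (f y); rewrite !nth_mkseq ?inE.
  by rewrite !nth_mkseq ?inE ?(ltn_trans lt_ij) // => /eqP-> /eqP->.
Qed.

Section SoStructure.
Variables (X : finType) (prec sq : rel X).

Definition sq_strict : rel X := fun x y => sq x y && ~~ sq y x.

Lemma sq_eqv_refl : reflexive (sq_eqv sq).
Proof. by move=> x; rewrite /sq_eqv eqxx. Qed.

Lemma sq_eqv_sym : symmetric (sq_eqv sq).
Proof. by move=> x y; rewrite /sq_eqv eq_sym andbC. Qed.

Lemma in_cls x y : (x \in cls sq y) = sq_eqv sq x y.
Proof. by rewrite inE. Qed.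

Lemma sq_strict_irr : irreflexive sq_strict.
Proof. by move=> x; rewrite /sq_strict andbN. Qed.

Lemma sq_eqv_strictF x y : sq_eqv sq x y -> sq_strict x y = false.
Proof.
by case/orP=> [/eqP-> | /andP[_ yx]]; [exact: sq_strict_irr | rewrite /sq_strict yx andbF].
Qed.

Lemma sq_eqv_frown R x y : sq_eqv sq x y -> ext prec sq R -> x = y \/ frown R x y.
Proof.
case: (eqVneq x y) => [-> | neq_xy]; first by left.
rewrite /sq_eqv (negbTE neq_xy) => /andP[xy yx] [[[R_irr R_trans] _] _ R_sq]; right.
move: (R_sq x y xy) (R_sq y x yx); rewrite /rel_frown /frown neq_xy eq_sym neq_xy /=.
case Rxy: (R x y); case Ryx: (R y x) => //=.
by have := R_irr x; rewrite (R_trans _ _ _ Rxy Ryx).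
Qed.

Hypothesis so : so_structure prec sq.

Lemma sq_neq x y : sq x y -> x != y.
Proof. by case: so => sq_irr _ _ _ xy; apply: contraTneq xy => ->; rewrite sq_irr. Qed.

Lemma sq_eqv_trans x y z : sq_eqv sq x y -> sq_eqv sq y z -> sq_eqv sq x z.
Proof.
have [_ _ sq_trans _] := so.
rewrite /sq_eqv => /orP[/eqP-> // | /andP[xy yx]] /orP[/eqP<- | /andP[yz zy]].
  by rewrite xy yx orbT.
case: eqVneq => //= neq_xz.
by rewrite (sq_trans _ _ _ xy yz) // (sq_trans _ _ _ zy yx) // eq_sym.
Qed.

Lemma sq_strict_chain x y z :
  sq x y -> sq y z -> sq_strict x y || sq_strict y z -> sq_strict x z.
Proof.
have [_ _ sq_trans _] := so.
move=> xy yz /orP[/andP[_ nyx] | /andP[_ nzy]].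
- have neq_xz : x != z by apply: contraNneq nyx => eq_xz; rewrite eq_xz.
  rewrite /sq_strict (sq_trans _ _ _ xy yz) //; apply: contra nyx => zx.
  by apply: sq_trans yz zx _; rewrite eq_sym sq_neq.
- have neq_xz : x != z by apply: contraNneq nzy => <-.
  rewrite /sq_strict (sq_trans _ _ _ xy yz) //; apply: contra nzy => zx.
  by apply: sq_trans zx xy _; rewrite eq_sym sq_neq.
Qed.

Lemma sq_strict_trans x y z : sq_strict x y -> sq_strict y z -> sq_strict x z.
Proof.
by move=> xy yz; apply: sq_strict_chain (andP xy).1 (andP yz).1 _; rewrite xy.
Qed.

Lemma sq_eqv_strict_trans x y z : sq_eqv sq x y -> sq_strict y z -> sq_strict x z.
Proof.
case/orP=> [/eqP-> // | /andP[xy _]] yz.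
by apply: sq_strict_chain xy (andP yz).1 _; rewrite yz orbT.
Qed.

Lemma sq_strict_eqv_trans x y z : sq_strict x y -> sq_eqv sq y z -> sq_strict x z.
Proof.
move=> xy /orP[/eqP<- // | /andP[yz _]].
by apply: sq_strict_chain (andP xy).1 yz _; rewrite xy.
Qed.

Lemma prec_sq_strict x y : prec x y -> sq_strict x y.
Proof.
have [sq_irr prec_sq _ prec_trans] := so.
move=> xy; rewrite /sq_strict prec_sq //=; apply/negP => yx.
by have := sq_irr x; rewrite prec_sq // (prec_trans x y x) // xy yx orbT.
Qed.

Lemma cls_eqv x y : sq_eqv sq x y -> cls sq x = cls sq y.
Proof.
move=> xy; apply/setP => z; rewrite !in_cls.
by apply/idP/idP => zx; [exact: sq_eqv_trans zx xy | rewrite (sq_eqv_trans zx) // sq_eqv_sym].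
Qed.

Lemma hat_sq_clsP x y : hat_sq sq (cls sq x) (cls sq y) <-> sq_strict x y.
Proof.
split=> [[_ _ neq_cls [x' [y' []]]] | xy].
  rewrite !in_cls => x'x y'y x'y'.
  have x'y'_strict : sq_strict x' y'.
    rewrite /sq_strict x'y'; apply: contraNN neq_cls => y'x'.
    apply/eqP/cls_eqv; rewrite sq_eqv_sym in x'x.
    by apply: sq_eqv_trans x'x (sq_eqv_trans _ y'y); rewrite /sq_eqv x'y' y'x' orbT.
  by apply: sq_eqv_strict_trans (sq_strict_eqv_trans x'y'_strict y'y); rewrite sq_eqv_sym.
split; [by exists x | by exists y | | by exists x, y; rewrite !in_cls !sq_eqv_refl (andP xy).1].
apply: contraTneq xy => eq_cls.
by rewrite sq_eqv_strictF // -in_cls -eq_cls in_cls sq_eqv_refl.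
Qed.

Lemma cov_hat_sq_cls x y : cov (hat_sq sq) (cls sq x) (cls sq y) ->
  sq_strict x y /\ forall z, sq_strict x z -> sq_strict z y -> False.
Proof.
case=> /hat_sq_clsP xy no_mid; split=> // z xz zy.
by apply: no_mid; exists (cls sq z); split; apply/hat_sq_clsP.
Qed.

Lemma exists_sq_ranking : exists f k, ranking (sq_eqv sq) sq_strict setT f k.
Proof.
exact: exists_ranking sq_eqv_refl sq_eqv_sym sq_eqv_trans sq_strict_irr
  sq_strict_trans sq_eqv_strict_trans setT.
Qed.

Lemma exists_sq_ranking_adjacent x y :
  sq_strict x y -> (forall z, sq_strict x z -> sq_strict z y -> False) ->
  exists f k, ranking (sq_eqv sq) sq_strict setT f k /\ f y = (f x).+1.
Proof.
exact: (exists_ranking_adjacent sq_eqv_refl sq_eqv_sym sq_eqv_trans sq_strict_irr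
  sq_strict_trans sq_eqv_strict_trans sq_strict_eqv_trans).
Qed.

Lemma ranking_ext_levels f k : ranking (sq_eqv sq) sq_strict setT f k ->
  ext prec sq (fun x y => f x < f y) /\
  exists2 gs, is_Omega (fun x y => f x < f y) (map (cls sq) gs)
            & map (cls sq) gs = mkseq (fun i => [set x | f x == i]) k.
Proof.
move=> [f_lt f_surj f_eq f_mono].
have f_eqT x y : (f x == f y) = sq_eqv sq x y by rewrite f_eq ?in_setT.
have f_monoT x y : sq_strict x y -> f x < f y by apply: f_mono; rewrite in_setT.
split.
  split; first exact: stratified_order_ltn.
    by move=> x y /prec_sq_strict /f_monoT.
  move=> x y xy; rewrite /rel_frown; case yx: (sq y x).
    by rewrite frown_ltnE sq_neq // f_eqT /sq_eqv xy yx /= !orbT.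
  by rewrite f_monoT // /sq_strict xy yx.
have [gs fgs] : exists gs, map f gs = iota 0 k.
  by apply: exists_preimage_iota => i /f_surj[x _ fx]; exists x.
have gsE : map (cls sq) gs = mkseq (fun i => [set x | f x == i]) k.
  rewrite /mkseq -fgs -map_comp; apply: eq_map => x; apply/setP => y.
  by rewrite !inE f_eqT.
exists gs; rewrite // gsE; apply: is_Omega_levels => [x | i /f_surj[x _ fx]].
  by rewrite f_lt ?in_setT.
by exists x.
Qed.

End SoStructure.

Theorem mainTheorem2 (X : finType) (prec sq : rel X) :
  so_structure prec sq ->
  (* (1) *)
  (forall a b : X,
     a \in cls sq b <->
     (forall R : rel X, ext prec sq R -> a = b \/ frown R a b)) /\
  (* (2) *)
  (exists R : rel X, ext prec sq R /\
     exists gs : seq X, is_Omega R (map (cls sq) gs)) /\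
  (* (3) *)
  (forall a b : X,
     cov (hat_sq sq) (cls sq a) (cls sq b) ->
     exists R : rel X, ext prec sq R /\
       exists ds : seq X, is_Omega R (map (cls sq) ds) /\
         exists i, i.+1 < size ds /\
           a \in cls sq (nth a ds i) /\ b \in cls sq (nth a ds i.+1)).
Proof.
move=> so; have [f [k rk]] := exists_sq_ranking so.
have [ext_f [gs Omega_f _]] := ranking_ext_levels so rk.
split; [|split].
- move=> a b; rewrite in_cls; split=> [ab R /(sq_eqv_frown ab) // | all_frown].
  have [-> | ] := all_frown _ ext_f; first exact: sq_eqv_refl.
  by case: rk => _ _ f_eq _; rewrite frown_ltnE f_eq ?in_setT // => /andP[].
- by exists (fun x y => f x < f y); split=> //; exists gs.
move=> a b /(cov_hat_sq_cls so) [ab no_mid].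
have [F [K [rkF Fb]]] := exists_sq_ranking_adjacent so ab no_mid.
have [ext_F [ds Omega_F dsE]] := ranking_ext_levels so rkF.
have FbK : F b < K by case: rkF => F_lt _ _ _; rewrite F_lt ?in_setT.
have size_ds : size ds = K by rewrite -(size_map (cls sq)) dsE size_mkseq.
have FaK : F a < K by rewrite (ltn_trans _ FbK) // Fb.
have clsE i : i < K -> cls sq (nth a ds i) = [set x | F x == i].
  by move=> lt_iK; rewrite -(nth_map a set0) ?size_ds // dsE nth_mkseq.
exists (fun x y => F x < F y); split=> //; exists ds; split=> //.
by exists (F a); rewrite size_ds -Fb FbK !clsE // !inE !eqxx.
Qed.
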